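(* There exists a discrete probability distribution $F$ on $(0,1]$ with $F$-almost surely every sample $X$ satisfying $X\ge 1/4$, such that, with $I_n(F)=(X_1,\ldots,X_n)$ a list of $n$ i.i.d. samples from $F$, $$\liminf_{n\to\infty}\frac{\mathbb{E}[\mathrm{BF}(I_n(F))]}{\mathbb{E}[\mathrm{OPT}(I_n(F))]} > \frac{11}{10}.$$
   Context: Bin packing: items with sizes in $(0,1]$ are packed into unit-capacity bins (total size per bin at most $1$); $\mathrm{OPT}(I)$ is the minimum number of bins for list $I$. The online algorithm Best Fit (BF) processes the items in the given order and packs the current item into the fullest bin (largest current load) into which it fits, opening a new bin if it fits into no existing bin; items are never moved. $\mathrm{BF}(I)$ denotes the number of bins Best Fit uses on list $I$. *)

From Stdlib Require Import Reals Lra Lia List ClassicalEpsilon.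
From Coquelicot Require Import Coquelicot.
Import ListNotations.
Open Scope R_scope.

Fixpoint bf_best (x : R) (bins : list R) : option R :=
  match bins with
  | nil => None
  | b :: bs =>
      let r := bf_best x bs in
      if Rle_dec (b + x) 1 then
        match r with
        | None => Some b
        | Some c => if Rle_dec c b then Some b else Some c
        end
      else r
  end.

Fixpoint replace_first (b y : R) (bins : list R) : list R :=
  match bins with
  | nil => nil
  | c :: cs => if Req_EM_T c b then y :: cs else c :: replace_first b y cs
  end.

Definition bf_step (bins : list R) (x : R) : list R :=
  match bf_best x bins with
  | None => bins ++ [x]
  | Some b => replace_first b (b + x) bins
  end.

Definition BF (I : list R) : nat := length (fold_left bf_step I nil).

Definition Rlist_sum (l : list R) : R := fold_right Rplus 0 l.

Definition packable (I : list R) (k : nat) : Prop :=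
  exists f : nat -> nat,
    (forall i, (i < length I)%nat -> (f i < k)%nat) /\
    (forall j, (j < k)%nat ->
       Rlist_sum (map (fun i => if Nat.eq_dec (f i) j then nth i I 0 else 0)
                      (seq 0 (length I))) <= 1).

Definition decP (P : Prop) : bool :=
  if excluded_middle_informative P then true else false.

Fixpoint first_packable (I : list R) (k fuel : nat) : nat :=
  match fuel with
  | O => k
  | S fuel' => if decP (packable I k) then k else first_packable I (S k) fuel'
  end.

(* OPT(I): least k such that I is packable into k bins (for items in (0,1]
   this is at most length I, which is returned as fallback). *)
Definition OPT (I : list R) : nat := first_packable I 0 (length I).

(* A discrete distribution is given by atoms s i with probabilities p i.
   Eiid s p n g = E[ g (X_1, ..., X_n) ] for X_1..X_n i.i.d. ~ F. *)
Fixpoint Eiid (s p : nat -> R) (n : nat) (g : list R -> R) : R :=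
  match n with
  | O => g nil
  | S m => Series (fun i => p i * Eiid s p m (fun l => g (s i :: l)))
  end.

(* F has the atoms 1/4 (probability 3/5) and 1/3 (probability 2/5), so n samples have
   expected total size 17n/60, and packing quarters four and thirds three to a bin shows
   OPT <= total size + 2.  Best Fit only creates loads that are multiples of 1/12, so it
   runs on integer loads.  No item fits into a bin of load above 3/4, and the bins of load
   at most 3/4 always form one of twelve configurations: Best Fit induces a finite Markov
   chain, on which a potential shows that it opens 1775/5676 bins per item on average.
   Hence liminf E[BF]/E[OPT] >= (1775/5676)/(17/60) > 1.103. *)

From Stdlib Require Import Reals Lra Lia List Permutation ClassicalEpsilon.
From Coquelicot Require Import Coquelicot.
Import ListNotations.
Open Scope R_scope.

Lemma is_series_two_terms (a : nat -> R) : (forall i, (2 <= i)%nat -> a i = 0) ->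
  is_series a (a 0%nat + a 1%nat).
Proof.
  intros Ha. apply (filterlim_ext_loc (fun _ => a 0%nat + a 1%nat)); [|apply filterlim_const].
  exists 1%nat. intros n Hn. induction n as [|n IH]; [lia|]. rewrite sum_Sn.
  destruct n as [|n]; [rewrite sum_O; reflexivity|].
  rewrite (Ha (S (S n))), <- IH by lia. symmetry. apply Rplus_0_r.
Qed.

Lemma Eiid_ext s p n g1 g2 : (forall l, g1 l = g2 l) -> Eiid s p n g1 = Eiid s p n g2.
Proof.
  revert g1 g2. induction n as [|m IH]; intros g1 g2 Hg; cbn; [apply Hg|].
  apply Series_ext. intros i. f_equal. apply IH. intros l. apply Hg.
Qed.

Section TwoPoint.

Variables s p : nat -> R.
Hypothesis p_two_point : forall i, (2 <= i)%nat -> p i = 0.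

Lemma Eiid_S_two_point n g : Eiid s p (S n) g =
  p 0%nat * Eiid s p n (fun l => g (s 0%nat :: l)) +
  p 1%nat * Eiid s p n (fun l => g (s 1%nat :: l)).
Proof.
  apply is_series_unique, is_series_two_terms. intros i Hi. rewrite p_two_point by exact Hi. ring.
Qed.

Hypothesis p_nonneg : forall i, 0 <= p i.

Lemma Eiid_le n g1 g2 :
  (forall l, length l = n -> List.Forall (fun x => x = s 0%nat \/ x = s 1%nat) l -> g1 l <= g2 l) ->
  Eiid s p n g1 <= Eiid s p n g2.
Proof.
  revert g1 g2. induction n as [|m IH]; intros g1 g2 Hg; [apply Hg; auto|].
  rewrite !Eiid_S_two_point.
  apply Rplus_le_compat; apply Rmult_le_compat_l; try apply p_nonneg;
    apply IH; intros l Hl Hs; apply Hg; cbn; auto.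
Qed.

Hypothesis p_sum : p 0%nat + p 1%nat = 1.

Lemma Eiid_const n a : Eiid s p n (fun _ => a) = a.
Proof.
  induction n as [|m IH]; [reflexivity|].
  rewrite Eiid_S_two_point, !IH, <- Rmult_plus_distr_r, p_sum. apply Rmult_1_l.
Qed.

Lemma Eiid_Rlist_sum n a :
  Eiid s p n (fun l => a + Rlist_sum l) = a + INR n * (p 0%nat * s 0%nat + p 1%nat * s 1%nat).
Proof.
  revert a. induction n as [|m IH]; intros a; [cbn; ring|].
  assert (Hcons : forall x, Eiid s p m (fun l => a + Rlist_sum (x :: l))
                          = (a + x) + INR m * (p 0%nat * s 0%nat + p 1%nat * s 1%nat)).
  { intros x. rewrite <- IH. apply Eiid_ext. intros l. unfold Rlist_sum. cbn. ring. }
  rewrite Eiid_S_two_point, !Hcons, S_INR. replace (p 1%nat) with (1 - p 0%nat) by lra. ring.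
Qed.

End TwoPoint.

Lemma Rlist_sum_app l l' : Rlist_sum (l ++ l') = Rlist_sum l + Rlist_sum l'.
Proof. unfold Rlist_sum. induction l as [|x l IH]; cbn; [ring|]. rewrite IH. ring. Qed.

Lemma Rlist_sum_repeat x n : Rlist_sum (repeat x n) = INR n * x.
Proof.
  unfold Rlist_sum. induction n as [|n IH]; [cbn; ring|].
  cbn [repeat fold_right]. rewrite IH, S_INR. ring.
Qed.

Lemma Rlist_sum_perm l l' : Permutation l l' -> Rlist_sum l = Rlist_sum l'.
Proof. unfold Rlist_sum. induction 1; cbn; [reflexivity|lra|lra|congruence]. Qed.

Lemma Permutation_two_values (a b : R) l : List.Forall (fun x => x = a \/ x = b) l ->
  exists q t, Permutation l (repeat a q ++ repeat b t).
Proof.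
  induction 1 as [|x l [-> | ->] _ [q [t IH]]].
  - exists 0%nat, 0%nat. reflexivity.
  - exists (S q), t. cbn. apply perm_skip, IH.
  - exists q, (S t). cbn. apply Permutation_cons_app, IH.
Qed.

Definition load (I : list R) (f : nat -> nat) (j : nat) : R :=
  Rlist_sum (map (fun i => if Nat.eq_dec (f i) j then nth i I 0 else 0) (seq 0 (length I))).

Definition packing (I : list R) (f : nat -> nat) (k : nat) : Prop :=
  (forall i, (i < length I)%nat -> (f i < k)%nat) /\ (forall j, (j < k)%nat -> load I f j <= 1).

Definition cons_bin (j : nat) (f : nat -> nat) (i : nat) : nat :=
  match i with O => j | S i => f i end.

Lemma load_cons x I f j :
  load (x :: I) f j = (if Nat.eq_dec (f 0%nat) j then x else 0) + load I (fun i => f (S i)) j.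
Proof. unfold load. cbn. f_equal. rewrite <- seq_shift, map_map. reflexivity. Qed.

Lemma load_unused I f j : (forall i, (i < length I)%nat -> f i <> j) -> load I f j = 0.
Proof.
  revert f. induction I as [|x I IH]; intros f Hf; [reflexivity|].
  rewrite load_cons, IH by (intros i Hi; apply Hf; cbn; lia).
  destruct (Nat.eq_dec (f 0%nat) j); [exfalso; apply (Hf 0%nat); cbn; auto; lia|ring].
Qed.

Lemma load_const I : load I (fun _ => 0%nat) 0%nat = Rlist_sum I.
Proof.
  induction I as [|x I IH]; [reflexivity|]. rewrite load_cons, IH. reflexivity.
Qed.

Lemma load_shift_bins I f k j : load I (fun i => k + f i)%nat (k + j) = load I f j.
Proof.
  revert f. induction I as [|x I IH]; intros f; [reflexivity|].
  rewrite !load_cons, IH.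
  destruct (Nat.eq_dec (k + f 0%nat) (k + j)), (Nat.eq_dec (f 0%nat) j); lia || reflexivity.
Qed.

Lemma load_perm I I' : Permutation I I' -> forall f, exists f',
  (forall i, (i < length I')%nat -> exists i0, (i0 < length I)%nat /\ f' i = f i0) /\
  (forall j, load I' f' j = load I f j).
Proof.
  induction 1 as [|x l l' _ IH|x y l|l l' l'' _ IH1 _ IH2]; intros f.
  - exists f. split; [intros i Hi; cbn in Hi; lia|reflexivity].
  - destruct (IH (fun i => f (S i))) as [g [Hg Hl]].
    exists (cons_bin (f 0%nat) g). split.
    + intros [|i] Hi; [exists 0%nat; cbn; split; [lia|reflexivity]|].
      destruct (Hg i) as [i0 [Hi0 E]]; [cbn in Hi; lia|].
      exists (S i0). cbn. split; [lia|exact E].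
    + intros j. rewrite !load_cons, <- Hl. reflexivity.
  - exists (cons_bin (f 1%nat) (cons_bin (f 0%nat) (fun i => f (S (S i))))). split.
    + intros [|[|i]] Hi; [exists 1%nat|exists 0%nat|exists (S (S i))]; cbn in *; split; auto; lia.
    + intros j. rewrite !load_cons. cbn [cons_bin]. ring.
  - destruct (IH1 f) as [g [Hg Hlg]], (IH2 g) as [h [Hh Hlh]].
    exists h. split.
    + intros i Hi. destruct (Hh i Hi) as [i1 [Hi1 ->]]. apply Hg, Hi1.
    + intros j. rewrite Hlh, Hlg. reflexivity.
Qed.

Lemma packable_perm I I' k : Permutation I I' -> packable I k -> packable I' k.
Proof.
  intros HP [f [Hf Hl]]. destruct (load_perm I I' HP f) as [f' [Hf' Hl']].
  exists f'. change (packing I' f' k). split.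
  - intros i Hi. destruct (Hf' i Hi) as [i0 [Hi0 ->]]. apply Hf, Hi0.
  - intros j Hj. rewrite Hl'. apply Hl, Hj.
Qed.

Lemma load_app I J f g k m :
  (forall i, (i < length I)%nat -> (f i < k)%nat) ->
  (forall i, (i < length J)%nat -> (g i < m)%nat) ->
  exists h, (forall i, (i < length (I ++ J))%nat -> (h i < k + m)%nat) /\
    (forall j, (j < k)%nat -> load (I ++ J) h j = load I f j) /\
    (forall j, load (I ++ J) h (k + j) = load J g j).
Proof.
  intros Hf Hg. revert f Hf. induction I as [|x I IH]; intros f Hf.
  - exists (fun i => k + g i)%nat. cbn [app]. split; [|split].
    + intros i Hi. specialize (Hg i Hi). lia.
    + intros j Hj. rewrite load_unused by (intros i _; lia). reflexivity.
    + apply load_shift_bins.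
  - destruct (IH (fun i => f (S i))) as [h [Hh [Hlow Hhigh]]].
    { intros i Hi. apply Hf. cbn. lia. }
    assert (Hf0 : (f 0%nat < k)%nat) by (apply Hf; cbn; lia).
    exists (cons_bin (f 0%nat) h). split; [|split].
    + intros [|i] Hi; cbn in *; [lia|]. apply Hh. lia.
    + intros j Hj. cbn [app]. rewrite !load_cons, <- Hlow by exact Hj. reflexivity.
    + intros j. cbn [app]. rewrite load_cons, Hhigh. cbn [cons_bin].
      destruct (Nat.eq_dec (f 0%nat) (k + j)); [lia|ring].
Qed.

Lemma packable_app I J k m : packable I k -> packable J m -> packable (I ++ J) (k + m).
Proof.
  intros [f [Hf HlI]] [g [Hg HlJ]].
  destruct (load_app I J f g k m Hf Hg) as [h [Hh [Hlow Hhigh]]].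
  exists h. change (packing (I ++ J) h (k + m)). split; [exact Hh|]. intros j Hj.
  destruct (Nat.lt_ge_cases j k) as [Hjk|Hjk].
  - rewrite Hlow by exact Hjk. apply HlI, Hjk.
  - replace j with (k + (j - k))%nat by lia. rewrite Hhigh. apply HlJ. lia.
Qed.

Lemma packable_one_bin I : Rlist_sum I <= 1 -> packable I 1.
Proof.
  intros Hs. exists (fun _ => 0%nat). change (packing I (fun _ => 0%nat) 1). split; [intros; lia|].
  intros j Hj. replace j with 0%nat by lia. rewrite load_const. exact Hs.
Qed.

Lemma packable_repeat x m n : (0 < m)%nat -> 0 <= x -> INR m * x <= 1 ->
  packable (repeat x n) (n / m + 1).
Proof.
  intros Hm Hx Hmx. rewrite (Nat.div_mod_eq n m) at 1. rewrite repeat_app.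
  apply packable_app.
  - induction (n / m)%nat as [|a IH].
    + rewrite Nat.mul_0_r. exists (fun _ => 0%nat). split; cbn; intros; lia.
    + rewrite Nat.mul_succ_r, repeat_app, <- Nat.add_1_r.
      apply packable_app; [exact IH|]. apply packable_one_bin.
      rewrite Rlist_sum_repeat. exact Hmx.
  - apply packable_one_bin. rewrite Rlist_sum_repeat.
    apply Rle_trans with (INR m * x); [|exact Hmx].
    apply Rmult_le_compat_r; [exact Hx|]. apply le_INR.
    pose proof (Nat.mod_upper_bound n m). lia.
Qed.

Lemma first_packable_le I k : packable I k ->
  forall fuel k0, (k0 <= k)%nat -> (first_packable I k0 fuel <= k)%nat.
Proof.
  intros HP fuel. induction fuel as [|fuel IH]; intros k0 Hk0; cbn; [exact Hk0|].
  unfold decP. destruct (excluded_middle_informative (packable I k0)); [exact Hk0|].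
  apply IH. destruct (Nat.eq_dec k0 k); [subst; contradiction|lia].
Qed.

Lemma first_packable_ge I fuel k0 : (k0 <= first_packable I k0 fuel)%nat.
Proof.
  revert k0. induction fuel as [|fuel IH]; intros k0; cbn; [lia|].
  unfold decP. destruct (excluded_middle_informative (packable I k0)); [lia|].
  specialize (IH (S k0)). lia.
Qed.

Lemma OPT_le_packable I k : packable I k -> (OPT I <= k)%nat.
Proof. intros HP. apply (first_packable_le I k HP). lia. Qed.

Lemma OPT_pos I : I <> [] -> (1 <= OPT I)%nat.
Proof.
  intros HI. unfold OPT. destruct I as [|x I]; [contradiction|]. cbn.
  unfold decP. destruct (excluded_middle_informative (packable (x :: I) 0)) as [[f [Hf _]]|_].
  - specialize (Hf 0%nat). cbn in Hf. lia.
  - apply first_packable_ge.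
Qed.

Lemma OPT_quarters_thirds_le I : List.Forall (fun x => x = /4 \/ x = /3) I ->
  INR (OPT I) <= Rlist_sum I + 2.
Proof.
  intros HI. destruct (Permutation_two_values _ _ I HI) as [q [t HP]].
  assert (H4 : INR 4 = 4) by (cbn; ring). assert (H3 : INR 3 = 3) by (cbn; ring).
  assert (Hpack : packable I (q / 4 + 1 + (t / 3 + 1))).
  { apply (packable_perm _ _ _ (Permutation_sym HP)).
    apply packable_app; apply packable_repeat; lia || lra. }
  apply OPT_le_packable, le_INR in Hpack. rewrite !plus_INR, INR_1 in Hpack.
  assert (Hq : INR (4 * (q / 4)) <= INR q) by apply le_INR, Nat.Div0.mul_div_le.
  assert (Ht : INR (3 * (t / 3)) <= INR t) by apply le_INR, Nat.Div0.mul_div_le.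
  rewrite mult_INR, H4 in Hq. rewrite mult_INR, H3 in Ht.
  rewrite (Rlist_sum_perm _ _ HP), Rlist_sum_app, !Rlist_sum_repeat. lra.
Qed.

(* [bf_step] with loads counted in units of [1/d]; unlike the real version it evaluates by
   computation, and [bf_step_grid] shows that it agrees with it. *)
Fixpoint bf_best_nat (d x : nat) (bins : list nat) : option nat :=
  match bins with
  | nil => None
  | b :: bs =>
      let r := bf_best_nat d x bs in
      if (b + x <=? d)%nat then
        match r with
        | None => Some b
        | Some c => if (c <=? b)%nat then Some b else Some c
        end
      else r
  end.

Fixpoint replace_first_nat (b y : nat) (bins : list nat) : list nat :=
  match bins with
  | nil => nil
  | c :: cs => if (c =? b)%nat then y :: cs else c :: replace_first_nat b y cs
  end.

Definition bf_step_nat (d : nat) (bins : list nat) (x : nat) : list nat :=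
  match bf_best_nat d x bins with
  | None => bins ++ [x]
  | Some b => replace_first_nat b (b + x) bins
  end.

Definition grid (d k : nat) : R := INR k / INR d.

Section Grid.

Variable d : nat.
Hypothesis d_pos : (0 < d)%nat.

Lemma grid_le a b : grid d a <= grid d b <-> (a <= b)%nat.
Proof.
  assert (Hd : 0 < INR d) by (apply lt_0_INR; exact d_pos).
  unfold grid, Rdiv. split; intros H.
  - apply INR_le, (Rmult_le_reg_r (/ INR d)); [apply Rinv_0_lt_compat|]; assumption.
  - apply Rmult_le_compat_r; [left; apply Rinv_0_lt_compat; assumption|apply le_INR; assumption].
Qed.

Lemma grid_add a b : grid d a + grid d b = grid d (a + b).
Proof. unfold grid. rewrite plus_INR. field. apply not_0_INR. lia. Qed.

Lemma grid_one : grid d d = 1.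
Proof. unfold grid. field. apply not_0_INR. lia. Qed.

Lemma grid_inj a b : grid d a = grid d b -> a = b.
Proof.
  intros H. apply Nat.le_antisymm; apply grid_le; rewrite H; apply Rle_refl.
Qed.

Lemma bf_best_grid x bins :
  bf_best (grid d x) (map (grid d) bins) = option_map (grid d) (bf_best_nat d x bins).
Proof.
  induction bins as [|b bs IH]; [reflexivity|].
  cbn [map bf_best bf_best_nat]. rewrite IH, grid_add, <- grid_one.
  destruct (Rle_dec (grid d (b + x)) (grid d d)) as [Hfit|Hfit];
    destruct (Nat.leb_spec (b + x) d) as [Hfit'|Hfit'];
    try (apply grid_le in Hfit; lia);
    try (exfalso; apply Hfit, grid_le; lia); [|reflexivity].
  destruct (bf_best_nat d x bs) as [c|]; [|reflexivity]. cbn [option_map].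
  destruct (Rle_dec (grid d c) (grid d b)) as [Hcb|Hcb];
    destruct (Nat.leb_spec c b) as [Hcb'|Hcb'];
    try (apply grid_le in Hcb; lia);
    try (exfalso; apply Hcb, grid_le; lia); reflexivity.
Qed.

Lemma replace_first_grid b y bins :
  replace_first (grid d b) (grid d y) (map (grid d) bins)
  = map (grid d) (replace_first_nat b y bins).
Proof.
  induction bins as [|c cs IH]; [reflexivity|]. cbn [map replace_first replace_first_nat].
  destruct (Req_EM_T (grid d c) (grid d b)) as [E|E];
    destruct (Nat.eqb_spec c b) as [E'|E'];
    try (apply grid_inj in E; contradiction); try (subst; contradiction);
    cbn [map]; rewrite ?IH; reflexivity.
Qed.

Lemma bf_step_grid bins x :
  bf_step (map (grid d) bins) (grid d x) = map (grid d) (bf_step_nat d bins x).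
Proof.
  unfold bf_step, bf_step_nat. rewrite bf_best_grid.
  destruct (bf_best_nat d x bins) as [b|]; cbn [option_map].
  - rewrite grid_add. apply replace_first_grid.
  - rewrite map_app. reflexivity.
Qed.

End Grid.

Definition opens_bin (d x : nat) (bins : list nat) : nat :=
  match bf_best_nat d x bins with Some _ => 0 | None => 1 end.

Lemma bf_best_nat_fits d x bins b : bf_best_nat d x bins = Some b -> (b + x <= d)%nat.
Proof.
  induction bins as [|c cs IH]; cbn; [discriminate|].
  destruct (Nat.leb_spec (c + x) d); [|exact IH].
  destruct (bf_best_nat d x cs) as [c'|]; [destruct (c' <=? c)%nat|];
    intros E; injection E as <-; auto.
Qed.

Lemma length_bf_step_nat d bins x :
  length (bf_step_nat d bins x) = (length bins + opens_bin d x bins)%nat.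
Proof.
  unfold bf_step_nat, opens_bin. destruct (bf_best_nat d x bins) as [b|].
  - rewrite Nat.add_0_r. induction bins as [|c cs IH]; cbn; [reflexivity|].
    destruct (c =? b)%nat; cbn; [reflexivity|]. rewrite IH. reflexivity.
  - rewrite length_app. reflexivity.
Qed.

Section OpenPart.

Variables (d theta x : nat).
Hypothesis item_large : (d <= theta + x)%nat.

Let small (k : nat) : bool := (k <=? theta)%nat.

Lemma bf_best_nat_filter bins : bf_best_nat d x bins = bf_best_nat d x (filter small bins).
Proof.
  induction bins as [|b bs IH]; [reflexivity|]. cbn. unfold small at 1.
  destruct (Nat.leb_spec b theta); cbn; rewrite IH; [reflexivity|].
  destruct (Nat.leb_spec (b + x) d); [lia|reflexivity].
Qed.

Lemma filter_replace_first_nat b y bins : small b = true ->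
  filter small (replace_first_nat b y bins)
  = filter small (replace_first_nat b y (filter small bins)).
Proof.
  intros Hb. induction bins as [|c cs IH]; [reflexivity|]. cbn.
  destruct (Nat.eqb_spec c b) as [->|Hcb].
  - rewrite Hb. cbn. rewrite Nat.eqb_refl. cbn.
    destruct (small y); [f_equal|]; symmetry; apply forallb_filter_id, forallb_filter.
  - apply Nat.eqb_neq in Hcb.
    destruct (small c) eqn:Hc; cbn; rewrite ?Hcb; cbn; rewrite Hc, IH; reflexivity.
Qed.

Lemma filter_bf_step_nat bins :
  filter small (bf_step_nat d bins x) = filter small (bf_step_nat d (filter small bins) x).
Proof.
  unfold bf_step_nat. rewrite <- bf_best_nat_filter.
  destruct (bf_best_nat d x bins) as [b|] eqn:Hb.
  - apply filter_replace_first_nat. apply bf_best_nat_fits in Hb.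
    unfold small. apply Nat.leb_le. lia.
  - rewrite !filter_app. f_equal. symmetry. apply forallb_filter_id, forallb_filter.
Qed.

Lemma opened_filter bins : opens_bin d x bins = opens_bin d x (filter small bins).
Proof. unfold opens_bin. rewrite <- bf_best_nat_filter. reflexivity. Qed.

End OpenPart.

Definition open_part (bins : list nat) : list nat := filter (fun k => k <=? 9)%nat bins.

(* The bin of load 9 can only arise from the state [6], so it precedes the other open bin. *)
Definition open_states : list (list nat) :=
  [[]; [3]; [4]; [6]; [7]; [8]; [9]; [9; 3]; [9; 4]; [9; 6]; [9; 7]; [9; 8]]%nat.

Lemma open_states_closed o x : In o open_states -> In x [3; 4]%nat ->
  In (open_part (bf_step_nat 12 o x)) open_states.
Proof.
  intros Ho Hx.
  repeat (destruct Ho as [<-|Ho]); [..|destruct Ho];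
  repeat (destruct Hx as [<-|Hx]); try destruct Hx; cbn; tauto.
Qed.

(* [phi] solves the Poisson equation of the chain: in every state, the expected number of
   opened bins plus the expected change of [phi] is exactly [bf_rate]. *)
Definition phi (o : list nat) : R :=
  match o with
  | [] => 0
  | [9] => -1625
  | [3] => -4135
  | [9; 3] => -5652
  | [4] => -3550
  | [9; 4] => -5301
  | [6] => -2750
  | [9; 6] => -4075
  | [7] | [8] => -1775
  | [9; 7] | [9; 8] => -3490
  | _ => 0
  end / 5676.

Definition bf_rate : R := 1775 / 5676.

Lemma phi_nonpos o : In o open_states -> phi o <= 0.
Proof.
  intros Ho. repeat (destruct Ho as [<-|Ho]); [..|destruct Ho]; unfold phi; simpl; lra.
Qed.

Lemma phi_drift o : In o open_states ->
  phi o + bf_rate <=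
  3/5 * (INR (opens_bin 12 3 o) + phi (open_part (bf_step_nat 12 o 3))) +
  2/5 * (INR (opens_bin 12 4 o) + phi (open_part (bf_step_nat 12 o 4))).
Proof.
  intros Ho. unfold bf_rate.
  repeat (destruct Ho as [<-|Ho]); [..|destruct Ho]; unfold phi; simpl; lra.
Qed.

Lemma open_part_bf_step_nat bins x : In x [3; 4]%nat ->
  open_part (bf_step_nat 12 bins x) = open_part (bf_step_nat 12 (open_part bins) x) /\
  length (bf_step_nat 12 bins x) = (length bins + opens_bin 12 x (open_part bins))%nat.
Proof.
  intros Hx. assert (Hlarge : (12 <= 9 + x)%nat) by (destruct Hx as [<-|[<-|[]]]; lia).
  split.
  - apply (filter_bf_step_nat 12 9 x Hlarge).
  - rewrite length_bf_step_nat, (opened_filter 12 9 x Hlarge). reflexivity.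
Qed.

Definition F_atom (i : nat) : R := match i with O => / 4 | _ => / 3 end.
Definition F_prob (i : nat) : R := match i with O => 3 / 5 | 1%nat => 2 / 5 | _ => 0 end.

Lemma F_prob_two_point i : (2 <= i)%nat -> F_prob i = 0.
Proof. destruct i as [|[|i]]; [lia|lia|reflexivity]. Qed.

Lemma F_prob_nonneg i : 0 <= F_prob i.
Proof. destruct i as [|[|i]]; cbn; lra. Qed.

Lemma F_prob_sum : F_prob 0%nat + F_prob 1%nat = 1.
Proof. cbn. lra. Qed.

Lemma grid_quarter : grid 12 3 = / 4.
Proof. unfold grid. cbn. field. Qed.

Lemma grid_third : grid 12 4 = / 3.
Proof. unfold grid. cbn. field. Qed.

Lemma Eiid_bf_bins_ge n : forall bins, In (open_part bins) open_states ->
  INR (length bins) + phi (open_part bins) + bf_rate * INR n <=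
  Eiid F_atom F_prob n (fun l => INR (length (fold_left bf_step l (map (grid 12) bins)))).
Proof.
  induction n as [|n IH]; intros bins Hbins.
  - cbn [Eiid fold_left]. rewrite length_map. pose proof (phi_nonpos _ Hbins). cbn [INR]. lra.
  - rewrite Eiid_S_two_point by exact F_prob_two_point. cbn [fold_left F_atom].
    rewrite <- grid_quarter, <- grid_third, !bf_step_grid by lia.
    destruct (open_part_bf_step_nat bins 3 ltac:(cbn; tauto)) as [Hopen3 Hlen3].
    destruct (open_part_bf_step_nat bins 4 ltac:(cbn; tauto)) as [Hopen4 Hlen4].
    assert (Hnext3 := open_states_closed _ 3 Hbins ltac:(cbn; tauto)).
    assert (Hnext4 := open_states_closed _ 4 Hbins ltac:(cbn; tauto)).
    rewrite <- Hopen3 in Hnext3. rewrite <- Hopen4 in Hnext4.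
    pose proof (IH _ Hnext3) as IH3. pose proof (IH _ Hnext4) as IH4.
    rewrite Hopen3, Hlen3, plus_INR in IH3. rewrite Hopen4, Hlen4, plus_INR in IH4.
    pose proof (phi_drift _ Hbins) as Hdrift.
    rewrite S_INR. cbn [F_prob]. lra.
Qed.

Lemma Eiid_BF_ge n : bf_rate * INR n <= Eiid F_atom F_prob n (fun l => INR (BF l)).
Proof.
  pose proof (Eiid_bf_bins_ge n [] ltac:(cbn; tauto)) as H.
  replace (phi (open_part [])) with 0 in H by (unfold phi; cbn; field).
  unfold BF. cbn [length map INR] in H. lra.
Qed.

Lemma Eiid_OPT_le n : Eiid F_atom F_prob n (fun l => INR (OPT l)) <= 2 + INR n * (17 / 60).
Proof.
  apply Rle_trans with (Eiid F_atom F_prob n (fun l => 2 + Rlist_sum l)).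
  - apply Eiid_le; [exact F_prob_two_point|exact F_prob_nonneg|].
    intros l _ Hl. rewrite Rplus_comm. apply OPT_quarters_thirds_le, Hl.
  - rewrite Eiid_Rlist_sum by (exact F_prob_two_point || exact F_prob_sum).
    cbn [F_prob F_atom]. lra.
Qed.

Lemma Eiid_OPT_ge n : (1 <= n)%nat -> 1 <= Eiid F_atom F_prob n (fun l => INR (OPT l)).
Proof.
  intros Hn. rewrite <- (Eiid_const F_atom F_prob F_prob_two_point F_prob_sum n 1) at 1.
  apply Eiid_le; [exact F_prob_two_point|exact F_prob_nonneg|].
  intros l Hl _. apply (le_INR 1), OPT_pos. intros ->. cbn in Hl. lia.
Qed.

Lemma BF_OPT_ratio_ge n : (4000 <= n)%nat ->
  1101 / 1000 <=
  Eiid F_atom F_prob n (fun l => INR (BF l)) / Eiid F_atom F_prob n (fun l => INR (OPT l)).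
Proof.
  intros Hn.
  assert (HN : 4000 <= INR n) by (apply le_INR in Hn; rewrite INR_IZR_INZ in Hn; exact Hn).
  pose proof (Eiid_BF_ge n) as HBF. pose proof (Eiid_OPT_le n) as HOPT.
  pose proof (Eiid_OPT_ge n ltac:(lia)) as HOPT1.
  set (A := Eiid F_atom F_prob n (fun l => INR (BF l))) in *.
  set (B := Eiid F_atom F_prob n (fun l => INR (OPT l))) in *.
  apply Rmult_le_reg_r with B; [lra|].
  replace (A / B * B) with A by (field; lra).
  unfold bf_rate in HBF. lra.
Qed.

Theorem lemma15 :
  exists (s p : nat -> R),
    (forall i, 0 <= p i) /\
    is_series p 1 /\
    (forall i, 0 < s i <= 1) /\
    (forall i, 0 < p i -> / 4 <= s i) /\
    Rbar_lt (Finite (11 / 10))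
      (LimInf_seq (fun n =>
         Eiid s p n (fun l => INR (BF l)) / Eiid s p n (fun l => INR (OPT l)))).
Proof.
  exists F_atom, F_prob. split; [|split; [|split; [|split]]].
  - exact F_prob_nonneg.
  - rewrite <- F_prob_sum. apply is_series_two_terms, F_prob_two_point.
  - intros [|i]; cbn; lra.
  - intros [|i] _; cbn; lra.
  - assert (Hev : eventually (fun n => 1101 / 1000 <=
      Eiid F_atom F_prob n (fun l => INR (BF l)) / Eiid F_atom F_prob n (fun l => INR (OPT l))))
      by (exists 4000%nat; exact BF_OPT_ratio_ge).
    pose proof (LimInf_le _ _ Hev) as HL. rewrite LimInf_seq_const in HL.
    destruct (LimInf_seq _); cbn in *; lra.
Qed.
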